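(* Let $X,K$ be topological spaces, $f:X\times K\to\mathbb R$ separately continuous, and $\phi:K\to C_p(X)$ given by $\phi(y)(x)=f(x,y)$. Suppose there exist a set $\Gamma\subseteq\mathbb R^X$ and a sequence $(\mathcal U_n)_{n\in\mathbb N}$ of countable covers of $K$ such that $X$ is $\sigma_\Gamma$-$\beta$-defavorable and $(\mathcal U_n)_{n\in\mathbb N}$ is countably pair complete with respect to $(\phi,\Gamma)$. Then for every $\varepsilon>0$ there is a residual subset $R_\varepsilon$ of $X$ such that for every $(x,y)\in R_\varepsilon\times K$ there are finitely many sets $F_i\in\mathcal U_i$, $i=0,\dots,k$, with $y\in\bigcap_{i\le k}F_i$, and a neighborhood $O$ of $(x,y)$ in $X\times K$ such that $|f(x,y)-f(x',y')|<\varepsilon$ for every $(x',y')\in O\cap\big(X\times\bigcap_{i\le k}F_i\big)$.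
   Context: $f$ is separately continuous if $f(x,\cdot)$ and $f(\cdot,y)$ are continuous for all $x\in X$, $y\in K$. $C_p(X)$ is the space of real continuous functions on $X$ with the pointwise convergence topology; $\mathbb R^X$ carries the product topology. A decreasing sequence $(U_n)$ of subsets of $K$ is countably pair complete with respect to $(\phi,\Gamma)$ if for any sequences $(y_n),(z_n)$ with $y_n,z_n\in U_n$ for all $n$, the sequence $(\phi(y_n)-\phi(z_n))_n$ has at least one cluster point in $\mathbb R^X$ belonging to $\Gamma$. A sequence of covers $\mathcal U_n=\{U^n_k:k\in\mathbb N\}$ of $K$ is countably pair complete with respect to $(\phi,\Gamma)$ if for each $\sigma\in\mathbb N^{\mathbb N}$ the sequence $(\bigcap_{i\le n}U^i_{\sigma(i)})_{n}$ is. The game $\mathcal J_\Gamma$ on $X$: $\beta$ first chooses a nonempty open $V_0\subseteq X$, then $\alpha$ chooses a nonempty open $U_0\subseteq V_0$ and $a_0\in X$; at step $n+1$, $\beta$ chooses a nonempty open $V_{n+1}\subseteq U_n$ and $\alpha$ a nonempty open $U_{n+1}\subseteq V_{n+1}$ and $a_{n+1}\in X$. $\alpha$ wins iff for each $g\in\Gamma$ there is $t\in\bigcap_nU_n$ with $g(t)\in\overline{\{g(a_n):n\in\mathbb N\}}$. $X$ is $\sigma_\Gamma$-$\beta$-defavorable if $\beta$ has no winning strategy in $\mathcal J_\Gamma$. A set is residual if its complement is of first category. *)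

From HB Require Import structures.
From mathcomp Require Import all_boot all_order all_algebra.
From mathcomp Require Import all_classical all_reals all_analysis.
Set Implicit Arguments. Unset Strict Implicit. Unset Printing Implicit Defensive.
Import Order.TTheory GRing.Theory Num.Theory.
Import numFieldNormedType.Exports.
Local Open Scope classical_set_scope.
Local Open Scope ring_scope.

Definition sep_continuous (R : realType) (X K : topologicalType)
  (f : X * K -> R) : Prop :=
  (forall x : X, continuous (fun y : K => f (x, y))) /\
  (forall y : K, continuous (fun x : X => f (x, y))).

(* phi : K -> C_p(X), phi(y)(x) = f(x,y), viewed in R^X (product topology). *)
Definition phi_of (R : realType) (X K : topologicalType) (f : X * K -> R)
  (y : K) : {ptws X -> R} := fun x => f (x, y).

Definition cpc_seq (R : realType) (X K : topologicalType)
  (phi : K -> {ptws X -> R}) (Gamma : set {ptws X -> R})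
  (W : nat -> set K) : Prop :=
  forall y z : nat -> K, (forall n, W n (y n)) -> (forall n, W n (z n)) ->
    exists g : {ptws X -> R}, Gamma g /\
      cluster ((fun n => (fun x => phi (y n) x - phi (z n) x) : {ptws X -> R}) @ \oo) g.

Definition seq_of_countable_covers (K : Type) (U : nat -> nat -> set K) : Prop :=
  forall n, \bigcup_k U n k = setT.

Definition cpc_covers (R : realType) (X K : topologicalType)
  (phi : K -> {ptws X -> R}) (Gamma : set {ptws X -> R})
  (U : nat -> nat -> set K) : Prop :=
  forall s : nat -> nat,
    cpc_seq phi Gamma (fun n => \bigcap_(i in [set i | (i <= n)%N]) U i (s i)).

(* A strategy for beta maps the history of alpha's
   moves ((U_0,a_0),...,(U_{n-1},a_{n-1})) to beta's next move V_n
   (beta's own earlier moves are determined by the strategy). *)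
Definition beta_strategy (X : Type) := seq (set X * X) -> set X.

Definition history (X : Type) (U : nat -> set X) (a : nat -> X) (n : nat)
  : seq (set X * X) := [seq (U i, a i) | i <- iota 0 n].

Definition alpha_legal (X : topologicalType) (s : beta_strategy X)
  (U : nat -> set X) (a : nat -> X) (i : nat) : Prop :=
  open (U i) /\ U i !=set0 /\ U i `<=` s (history U a i).

Definition beta_legal (X : topologicalType) (s : beta_strategy X)
  (U : nat -> set X) (a : nat -> X) (n : nat) : Prop :=
  open (s (history U a n)) /\ s (history U a n) !=set0 /\
  (forall m, n = m.+1 -> s (history U a n) `<=` U m).

Definition alpha_wins (R : realType) (X : topologicalType)
  (Gamma : set {ptws X -> R}) (U : nat -> set X) (a : nat -> X) : Prop :=
  forall g, Gamma g ->
    exists t : X, (forall n, U n t) /\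
      closure [set (g : X -> R) (a n) | n in [set: nat]] ((g : X -> R) t).

Definition beta_winning (R : realType) (X : topologicalType)
  (Gamma : set {ptws X -> R}) (s : beta_strategy X) : Prop :=
  (forall U a n, (forall i, (i < n)%N -> alpha_legal s U a i) ->
      beta_legal s U a n) /\
  (forall U a, (forall i, alpha_legal s U a i) -> ~ alpha_wins Gamma U a).

Definition sigma_beta_defavorable (R : realType) (X : topologicalType)
  (Gamma : set {ptws X -> R}) : Prop :=
  ~ exists s : beta_strategy X, beta_winning Gamma s.

Definition nowhere_dense (X : topologicalType) (A : set X) : Prop :=
  interior (closure A) = set0.

Definition residual (X : topologicalType) (A : set X) : Prop :=
  exists N : nat -> set X, (forall n, nowhere_dense (N n)) /\
    ~` A `<=` \bigcup_n N n.

(* For a choice s of one member of each cover, call x controlled at level n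
   along s when, near x, the oscillation of f between two points of the cell
   U_0^{s 0} /\ ... /\ U_n^{s n} is at most eps/2 as soon as it is below eps/4
   at finitely many points of X.  At a point controlled along every s,
   separate continuity gives the joint eps-estimate.  The points uncontrolled
   along some s form a meagre set: otherwise, by the Banach category theorem,
   beta can keep playing open sets in every open part of which they are
   non-meagre, fixing s one index at a time and picking y_n, z_n in the n-th
   cell whose difference exceeds eps/2 on his move but stays below eps/4 at
   alpha's points a_0, ..., a_n.  Pair completeness gives a cluster point g in
   Gamma of phi y_n - phi z_n, with |g t| >= eps/2 on the intersection of
   alpha's moves and |g a_n| <= eps/4, so alpha loses every play: beta would
   win J_Gamma. *)

From HB Require Import structures.
From mathcomp Require Import all_boot all_order all_algebra.
From mathcomp Require Import all_classical all_reals all_analysis.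
From mathcomp Require Import lra zify.
Import Order.TTheory GRing.Theory Num.Theory.
Import numFieldNormedType.Exports.
Local Open Scope classical_set_scope.
Local Open Scope ring_scope.

Set Implicit Arguments. Unset Strict Implicit.

Section Meagre.
Context {X : topologicalType}.
Implicit Types (A B N S V W : set X).

Lemma closure_open_meet A V p : closure A p -> open V -> V p -> A `&` V !=set0.
Proof. by move=> cA oV Vp; apply: cA; exact: open_nbhs_nbhs. Qed.

Lemma nowhere_denseP N :
  nowhere_dense N <-> forall V, open V -> V `<=` closure N -> V = set0.
Proof.
split=> [nd V oV VN|H]; last first.
  by apply: H; [exact: open_interior|exact: interior_subset].
apply/seteqP; split => // p Vp.
suff : interior (closure N) p by rewrite nd.
exact: filterS VN (open_nbhs_nbhs (conj oV Vp)).
Qed.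

Lemma nowhere_denseS A B : A `<=` B -> nowhere_dense B -> nowhere_dense A.
Proof.
move=> AB /nowhere_denseP ndB; apply/nowhere_denseP => V oV VA.
exact: ndB oV (subset_trans VA (closureS AB)).
Qed.

Lemma nowhere_dense0 : nowhere_dense (set0 : set X).
Proof. by apply/nowhere_denseP => V _; rewrite closure0 subset0. Qed.

Lemma nowhere_dense_closureD A : open A -> nowhere_dense (closure A `\` A).
Proof.
move=> oA; apply/nowhere_denseP => V oV VC; apply/seteqP; split => // p Vp.
have [q [[cAq nAq] Vq]] := closure_open_meet (VC p Vp) oV Vp.
have [r [Ar Vr]] := closure_open_meet cAq oV Vq.
by have [s [[_ nAs] [_ As]]] :=
  closure_open_meet (VC r Vr) (openI oV oA) (conj Vr Ar).
Qed.

Lemma nowhere_dense_trivIset (I : Type) (D : set I) (O N : I -> set X) :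
  (forall i, D i -> open (O i)) -> trivIset D O ->
  (forall i, D i -> nowhere_dense (N i)) ->
  nowhere_dense (\bigcup_(i in D) (N i `&` O i)).
Proof.
move=> oO trO ndN; apply/nowhere_denseP => V oV VC.
apply/seteqP; split => // p Vp.
have [q [[i Di [_ Oq]] Vq]] := closure_open_meet (VC p Vp) oV Vp.
have oVO : open (V `&` O i) by exact: openI oV (oO i Di).
suff /seteqP[+ _] : V `&` O i = set0 by move/(_ q (conj Vq Oq)).
apply: (nowhere_denseP _).1 (ndN i Di) _ _ _ => //.
move=> r [Vr Or] B Br.
have [s [[j Dj [Ns Os]] [Bs [Vs Ois]]]] :=
  VC r Vr _ (filterI Br (open_nbhs_nbhs (conj oVO (conj Vr Or)))).
have ij : i = j by apply: trO => //; exists s.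
by subst j; exists s.
Qed.

Definition meagre S := exists N : nat -> set X,
  (forall n, nowhere_dense (N n)) /\ S `<=` \bigcup_n N n.

Lemma meagreS A B : A `<=` B -> meagre B -> meagre A.
Proof.
by move=> AB [N [ndN BN]]; exists N; split => //; exact: subset_trans BN.
Qed.

Lemma nowhere_dense_meagre A : nowhere_dense A -> meagre A.
Proof.
move=> ndA; exists (fun n => if n is 0%N then A else set0); split.
  by case=> // _; exact: nowhere_dense0.
by move=> x Ax; exists 0%N.
Qed.

Lemma meagre_bigcup (S : nat -> set X) :
  (forall j, meagre (S j)) -> meagre (\bigcup_j S j).
Proof.
move=> /choice[N HN].
exists (fun k => if unpickle k is Some (j, n) then N j n else set0); split.
  move=> k; case: (unpickle k) => [[j n]|]; last exact: nowhere_dense0.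
  exact: (HN j).1.
move=> x [j _ Sx]; have [n _ Nx] := (HN j).2 x Sx.
by exists (pickle (j, n)) => //; rewrite pickleK.
Qed.

Lemma meagreU A B : meagre A -> meagre B -> meagre (A `|` B).
Proof.
move=> mA mB; apply: (@meagreS _ (\bigcup_j if j is 0%N then A else B)).
  by move=> x [Ax|Bx]; [exists 0%N|exists 1%N].
by apply: meagre_bigcup => -[|j].
Qed.

Lemma nonmeagre_bigcup A (S : nat -> set X) :
  ~ meagre A -> A `<=` \bigcup_j S j -> exists j, ~ meagre (S j).
Proof.
move=> nmA AS; apply: contrapT => allm.
apply/nmA/(meagreS AS)/meagre_bigcup => j.
by apply: contrapT => nmj; apply: allm; exists j.
Qed.

Lemma closure_maximal_disjoint (D E : set (set X)) :
  (forall Q V, D Q -> open V -> D (Q `&` V)) ->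
  maximal_disjoint_subcollection id E D ->
  \bigcup_(Q in D) Q `<=` closure (\bigcup_(Q in E) Q).
Proof.
move=> DI [ED trE maxE] x [Q DQ Qx]; apply: contrapT => ncx.
pose Q' := Q `&` ~` closure (\bigcup_(Q in E) Q).
have disjE P y : E P -> P y -> ~ Q' y.
  by move=> EP Py [_]; apply; apply: subset_closure; exists P.
apply: (maxE (E `|` [set Q'])).
- split=> [P|/(_ Q' (or_intror erefl)) EQ']; first by left.
  exact: disjE EQ' (conj Qx ncx) (conj Qx ncx).
- move=> P [/ED//|->]; apply: DI => //.
  exact/closed_openC/closed_closure.
- move=> P1 P2 [EP1|->] [EP2|->] // [y [P1y P2y]].
  + by apply: trE => //; exists y.
  + by case: (disjE P1 y).
  + by case: (disjE P2 y).
Qed.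

Lemma banach_category S :
  meagre (S `&` \bigcup_(Q in [set Q | open Q /\ meagre (S `&` Q)]) Q).
Proof.
set D := [set Q | open Q /\ meagre (S `&` Q)].
have [E maxE] := ex_maximal_disjoint_subcollection id D.
have [ED trE _] := maxE.
pose Uo := \bigcup_(Q in E) Q.
have oUo : open Uo by apply: bigcup_open => Q /ED[].
have DUo : \bigcup_(Q in D) Q `<=` closure Uo.
  apply: closure_maximal_disjoint maxE => Q V [oQ mQ] oV.
  by split; [exact: openI|apply: meagreS mQ => y [? []]].
have /choice[N HN] : forall Q, exists N : nat -> set X, E Q ->
    (forall n, nowhere_dense (N n)) /\ S `&` Q `<=` \bigcup_n N n.
  move=> Q; have [/ED[_ [N HN]]|nEQ] := pselect (E Q); first by exists N.
  by exists (fun=> set0).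
pose M n := \bigcup_(Q in E) (N Q n `&` Q).
apply: (@meagreS _ ((\bigcup_n M n) `|` (closure Uo `\` Uo))).
  move=> x [Sx Dx]; have [[Q EQ Qx]|nUx] := pselect (Uo x); last first.
    by right; split => //; exact: DUo.
  have [n _ Nx] := (HN Q EQ).2 x (conj Sx Qx).
  by left; exists n => //; exists Q.
apply: meagreU; last exact/nowhere_dense_meagre/nowhere_dense_closureD.
exists M; split => // n.
apply: nowhere_dense_trivIset => //; first by move=> Q /ED[].
by move=> Q EQ; exact: (HN Q EQ).1.
Qed.

Definition nonmeagre_in S W := [/\ open W, W !=set0 &
  forall V, open V -> V !=set0 -> V `<=` W -> ~ meagre (S `&` V)].

Lemma nonmeagre_inP S W : nonmeagre_in S W -> S `&` W !=set0.
Proof.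
case=> oW nW nmW; apply: contrapT => /set0P/negP/negbNE/eqP SW0.
apply: nmW oW nW _ _ => //; rewrite SW0.
exact/nowhere_dense_meagre/nowhere_dense0.
Qed.

Lemma nonmeagre_in_subset S Q : open Q -> ~ meagre (S `&` Q) ->
  exists2 W, W `<=` Q & nonmeagre_in S W.
Proof.
move=> oQ nmQ.
pose Om := \bigcup_(V in [set V | open V /\ meagre (S `&` V)]) V.
have [[w Ww]|Q_Om] := pselect ((Q `&` ~` closure Om) !=set0).
  exists (Q `&` ~` closure Om) => [y []//|]; split.
  - by apply: openI => //; exact/closed_openC/closed_closure.
  - by exists w.
  - move=> V oV [v Vv] VW mV; have [_] := VW v Vv; apply.
    by apply: subset_closure; exists V.
case: nmQ; apply: (@meagreS _ ((S `&` Om) `|` (closure Om `\` Om))).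
  move=> x [Sx Qx]; have [Omx|nOmx] := pselect (Om x); first by left.
  by right; split => //; apply: contrapT => ncx; apply: Q_Om; exists x.
apply: meagreU; first exact: banach_category.
by apply/nowhere_dense_meagre/nowhere_dense_closureD/bigcup_open => V [].
Qed.

End Meagre.

Section PointwiseClusterPoints.
Variables (R : realType) (X : topologicalType).

Lemma cluster_ptws_near (h : nat -> {ptws X -> R}) (g : {ptws X -> R}) p r N :
  cluster (h @ \oo) g -> 0 < r ->
  exists2 n, (N <= n)%N & `|(g : X -> R) p - (h n : X -> R) p| < r.
Proof.
move=> clg r0.
have hN : (h @ \oo) (h @` [set n | (N <= n)%N]).
  by exists N => // n Nn; exists n.
have gp : nbhs g
    [set k : {ptws X -> R} | `|(g : X -> R) p - (k : X -> R) p| < r].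
  exact: (cvgr_dist_lt (FF := nbhs_pfilter g) _ _
    (@proj_continuous _ _ p g) _ r0).
by have [_ [[n Nn <-] hn]] := clg _ _ hN gp; exists n.
Qed.

Lemma cluster_gap (h : nat -> {ptws X -> R}) (g : {ptws X -> R}) (a : nat -> X)
    t (d c : R) :
  d < c -> cluster (h @ \oo) g ->
  (forall n, c < `|(h n : X -> R) t|) ->
  (forall j n, (j <= n)%N -> `|(h n : X -> R) (a j)| < d) ->
  ~ closure [set (g : X -> R) (a n) | n in [set: nat]] ((g : X -> R) t).
Proof.
move=> dc clg ht ha cl_t.
have gt : c <= `|(g : X -> R) t|.
  rewrite leNgt; apply/negP; rewrite -subr_gt0.
  move=> /(cluster_ptws_near t 0 clg)[n _].
  have := ht n; have := lerB_dist ((h n : X -> R) t) ((g : X -> R) t).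
  rewrite distrC; lra.
have ga j : `|(g : X -> R) (a j)| <= d.
  rewrite leNgt; apply/negP; rewrite -subr_gt0.
  move=> /(cluster_ptws_near (a j) j clg)[n jn].
  have := ha j n jn.
  have := lerB_dist ((g : X -> R) (a j)) ((h n : X -> R) (a j)).
  lra.
have cd : 0 < c - d by rewrite subr_gt0.
have [_ [[n _ <-] /= gn]] := cl_t _ (nbhsx_ballx _ _ cd).
have := ga n; have := lerB_dist ((g : X -> R) t) ((g : X -> R) (a n)).
move: gn gt; rewrite /ball /= /ball_ /=; lra.
Qed.

End PointwiseClusterPoints.

Section OscillationControl.
Variables (R : realType) (X K : topologicalType) (f : X * K -> R).
Variables (U : nat -> nat -> set K) (eps : R).
Hypothesis eps_gt0 : 0 < eps.
Hypothesis f_sep : sep_continuous f.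

Local Notation delta := (eps / 4).
Local Notation gap := (eps / 2).

Definition cover_cell (s : nat -> nat) n : set K :=
  \bigcap_(i in [set i | (i <= n)%N]) U i (s i).

Definition controlled n s x := exists2 V, open_nbhs x V & exists F : seq X,
  forall x', V x' -> forall y z, cover_cell s n y -> cover_cell s n z ->
    (forall a, a \in F -> `|f (a, y) - f (a, z)| < delta) ->
    `|f (x', y) - f (x', z)| <= gap.

Definition uncontrolled_from m s : set X := [set x | exists2 s',
  (forall i, (i < m)%N -> s' i = s i) & forall n, ~ controlled n s' x].

Lemma cover_cell_ext s1 s2 n :
  (forall i, (i <= n)%N -> s1 i = s2 i) -> cover_cell s1 n = cover_cell s2 n.
Proof.
by move=> s12; apply/seteqP; split => y + i /= ilen => /(_ i ilen);
  rewrite s12.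
Qed.

Lemma nbhs_close_at (F : seq X) y :
  nbhs y [set y' | forall a, a \in F -> `|f (a, y) - f (a, y')| < delta].
Proof.
have delta_gt0 : 0 < delta by rewrite divr_gt0.
elim: F => [|a F IH]; first exact: filterS filterT.
have Ha : nbhs y [set y' | `|f (a, y) - f (a, y')| < delta].
  exact: (cvgr_dist_lt _ _ (f_sep.1 a y) _ delta_gt0).
apply: filterS (filterI Ha IH) => y' [ay' Fy'] b.
by rewrite in_cons => /orP[/eqP ->|]; [exact: ay'|exact: Fy'].
Qed.

Lemma controlled_continuity n s x y : controlled n s x -> cover_cell s n y ->
  exists2 O, nbhs (x, y) O & forall x' y', O (x', y') -> cover_cell s n y' ->
    `|f (x, y) - f (x', y')| < eps.
Proof.
move=> [V Vx [F HF]] celly.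
have eps2_gt0 : 0 < eps / 2 by rewrite divr_gt0.
pose Ox := V `&` [set x' | `|f (x, y) - f (x', y)| < eps / 2].
pose Oy := [set y' | forall a, a \in F -> `|f (a, y) - f (a, y')| < delta].
exists (Ox `*` Oy).
  exists (Ox, Oy) => //=; split; last exact: nbhs_close_at.
  apply: filterI (open_nbhs_nbhs Vx) _.
  exact: cvgr_dist_lt _ _ (f_sep.2 y x) _ eps2_gt0.
move=> x' y' [[Vx' xx'] yy'] celly'.
have := HF x' Vx' y y' celly celly' yy'.
rewrite -[f (x, y)](subrK (f (x', y))) -addrA => x'yy'.
apply: le_lt_trans (ler_normD _ _) _.
by rewrite [eps]splitr ltr_leD.
Qed.

Lemma not_controlled_witness n s x W (F : seq X) :
  ~ controlled n s x -> open_nbhs x W ->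
  exists x' y z, [/\ W x', cover_cell s n y, cover_cell s n z,
    forall a, a \in F -> `|f (a, y) - f (a, z)| < delta &
    gap < `|f (x', y) - f (x', z)|].
Proof.
move=> nc Wx; apply: contrapT => nw; apply: nc; exists W => //; exists F.
move=> x' Wx' y z celly cellz Fyz; rewrite leNgt; apply/negP => big.
by apply: nw; exists x', y, z.
Qed.

Lemma open_gt_norm (g : X -> R) r : continuous g -> open [set x | r < `|g x|].
Proof.
move=> cg; rewrite openE => x /= rgx.
have : 0 < `|g x| - r by rewrite subr_gt0.
move=> /(cvgr_dist_lt _ _ (cg x)); apply: filterS => t /=.
have := lerB_dist (g x) (g t); lra.
Qed.

Definition update (s : nat -> nat) m j : nat -> nat :=
  fun i => if i == m then j else s i.

Lemma uncontrolled_from_split m s :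
  uncontrolled_from m s `<=` \bigcup_j uncontrolled_from m.+1 (update s m j).
Proof.
move=> x [s' s's nc]; exists (s' m) => //; exists s' => // i ilt.
by rewrite /update; case: eqVneq => [->//|im]; apply: s's; lia.
Qed.

(* [pt1] and [pt2] are the points y_n, z_n of the current cell. *)
Record state := State { cells : nat -> nat; move : set X; pt1 : K; pt2 : K }.

Definition invariant m st :=
  nonmeagre_in (uncontrolled_from m (cells st)) (move st).

Definition next_state (st : state) m (Ua : set X) (F : seq X) (st' : state) :=
  [/\ forall i, (i < m)%N -> cells st' i = cells st i,
    invariant m.+1 st', move st' `<=` Ua,
    [/\ cover_cell (cells st') m (pt1 st'), cover_cell (cells st') m (pt2 st') &
      forall a, a \in F -> `|f (a, pt1 st') - f (a, pt2 st')| < delta] &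
    forall x, move st' x -> gap < `|f (x, pt1 st') - f (x, pt2 st')|].

Lemma exists_next_state st m Ua F :
  invariant m st -> open Ua -> Ua !=set0 -> Ua `<=` move st ->
  exists st', next_state st m Ua F st'.
Proof.
case: st => s V y0 z0 [oV nV nmV] oUa nUa UaV /=.
have [j nmj] :
    exists j, ~ meagre (uncontrolled_from m.+1 (update s m j) `&` Ua).
  apply: nonmeagre_bigcup (nmV Ua oUa nUa UaV) _.
  by move=> x [/uncontrolled_from_split[j _ ?] ?]; exists j.
have [W WUa nmW] := nonmeagre_in_subset oUa nmj.
have [x [[s' s's nc] Wx]] := nonmeagre_inP nmW.
have [oW _ _] := nmW.
have [x' [y [z [Wx' celly cellz Fyz big]]]] :=
  not_controlled_witness F (nc m) (conj oW Wx).
have cell_s' : cover_cell s' m = cover_cell (update s m j) m.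
  by apply: cover_cell_ext => i im; apply: s's.
have cont : continuous (fun x => f (x, y) - f (x, z)).
  by move=> ?; apply: cvgB; [exact: f_sep.2|exact: f_sep.2].
exists (State (update s m j)
  (W `&` [set x | gap < `|f (x, y) - f (x, z)|]) y z).
split => /=; rewrite -?cell_s' //.
- by move=> i im; rewrite /update ifN // ltn_eqF.
- have [_ _ nmW'] := nmW; split.
  + exact: openI (open_gt_norm _ cont).
  + by exists x'.
  + by move=> V' oV' nV' V'W; apply: nmW' => // ? /V'W[].
- by move=> ? [/WUa].
- by move=> ? [].
Qed.

Definition choose_next (st : state) m Ua F : state :=
  if pselect (exists st', next_state st m Ua F st') is left H
  then projT1 (cid H) else st.

Lemma choose_nextP st m Ua F : (exists st', next_state st m Ua F st') ->
  next_state st m Ua F (choose_next st m Ua F).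
Proof.
by rewrite /choose_next; case: pselect => // H _; exact: projT2 (cid H).
Qed.

Fixpoint play_states (init : state) (Ua : nat -> set X) (a : nat -> X) m :=
  if m is m'.+1 then
    choose_next (play_states init Ua a m') m' (Ua m') [seq a i | i <- iota 0 m]
  else init.

Lemma play_states_ext init Ua Ua' a a' n :
  (forall i, (i < n)%N -> Ua i = Ua' i /\ a i = a' i) ->
  play_states init Ua a n = play_states init Ua' a' n.
Proof.
elim: n => [//|n IH] eq_n /=.
have [-> _] := eq_n n (ltnSn n).
rewrite IH => [|i ilt]; last by apply: eq_n; lia.
congr choose_next; apply: (eq_in_map _ _ (iota 0 n.+1)).1 => i.
rewrite mem_iota => /andP[_ ilt].
by have [_ ->] := eq_n i ilt.
Qed.

(* [x0] is a junk default for reading alpha's moves off the history. *)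
Definition strategy init (x0 : X) : beta_strategy X := fun h =>
  move (play_states init (fun i => (nth (setT, x0) h i).1)
    (fun i => (nth (setT, x0) h i).2) (size h)).

Lemma strategy_history init x0 Ua a n :
  strategy init x0 (history Ua a n) = move (play_states init Ua a n).
Proof.
rewrite /strategy /history size_map size_iota; congr move.
by apply: play_states_ext => i ilt; rewrite (nth_map 0) ?size_iota // nth_iota.
Qed.

Lemma legal_play_states init x0 Ua a n : invariant 0 init ->
  (forall i, (i < n)%N -> alpha_legal (strategy init x0) Ua a i) ->
  invariant n (play_states init Ua a n) /\ forall m, (m < n)%N ->
    next_state (play_states init Ua a m) m (Ua m) [seq a i | i <- iota 0 m.+1]
      (play_states init Ua a m.+1).
Proof.
move=> inv0; elim: n => [//|n IH] legal.
have [inv_n next_n] := IH (fun i ilt => legal i (ltnW ilt)).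
have [oUa [nUa]] := legal n (ltnSn n); rewrite strategy_history => UaV.
have next := choose_nextP
  (exists_next_state [seq a i | i <- iota 0 n.+1] inv_n oUa nUa UaV).
split=> [|m]; first by have [] := next.
by rewrite ltnS leq_eqVlt => /orP[/eqP->|/next_n].
Qed.

Variable Gamma : set {ptws X -> R}.
Hypothesis cpc : cpc_covers (phi_of f) Gamma U.
Hypothesis defav : sigma_beta_defavorable Gamma.

Lemma legal_play_lost init x0 Ua a : invariant 0 init ->
  (forall i, alpha_legal (strategy init x0) Ua a i) -> ~ alpha_wins Gamma Ua a.
Proof.
move=> inv0 legal wins.
pose st := play_states init Ua a.
have next m : next_state (st m) m (Ua m) [seq a i | i <- iota 0 m.+1] (st m.+1).
  exact: (legal_play_states (n := m.+1) inv0 (fun i _ => legal i)).2.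
pose s i := cells (st i.+1) i.
have cells_s m i : (i < m)%N -> cells (st m) i = s i.
  elim: m => [//|m IH]; rewrite ltnS leq_eqVlt => /orP[/eqP-> //|im].
  by have [agree _ _ _ _] := next m; rewrite agree // IH.
have pts_in_cell n :
    cover_cell s n (pt1 (st n.+1)) /\ cover_cell s n (pt2 (st n.+1)).
  have -> : cover_cell s n = cover_cell (cells (st n.+1)) n.
    by apply: cover_cell_ext => i ilen; rewrite cells_s.
  by have [_ _ _ [] ] := next n.
have [g [Gg clg]] :=
  cpc (fun n => (pts_in_cell n).1) (fun n => (pts_in_cell n).2).
have [t [Ut cl_t]] := wins g Gg.
apply: (cluster_gap (a := a) (d := delta) (c := gap) _ clg _ _ cl_t).
- by rewrite ltr_pM2l // ltf_pV2 ?posrE //; lra.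
- move=> n; have [_ _ _ _ big] := next n; apply: big.
  by have [_ [_]] := legal n.+1; rewrite strategy_history; apply; exact: Ut.
- move=> j n jn; have [_ _ _ [_ _ small] _] := next n; apply: small.
  by apply: map_f; rewrite mem_iota; lia.
Qed.

Lemma meagre_uncontrolled s : meagre (uncontrolled_from 0 s).
Proof.
apply: contrapT => nm.
have nmT : ~ meagre (uncontrolled_from 0 s `&` setT) by rewrite setIT.
have [W0 _ inv0] := nonmeagre_in_subset openT nmT.
have [x [[s' _ nc] _]] := nonmeagre_inP inv0.
(* An uncontrolled point makes K nonempty. *)
have [_ [y0 _]] := not_controlled_witness [::] (nc 0%N) (conj openT I).
pose init := State s W0 y0 y0.
have inv_init : invariant 0 init := inv0.
apply: defav; exists (strategy init x); split=> [Ua a n legal|Ua a legal].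
  have [[oV nV _] next] := legal_play_states inv_init legal.
  rewrite /beta_legal strategy_history; split => //; split => // m nm1.
  by subst n; have [_ _ ? _ _] := next m (ltnSn m).
exact: legal_play_lost inv_init legal.
Qed.

Definition well_controlled : set X :=
  [set x | forall s, exists n, controlled n s x].

Lemma residual_well_controlled : residual well_controlled.
Proof.
have [N [ndN sub]] := meagre_uncontrolled (fun=> 0%N).
exists N; split => // x /existsNP[s nc]; apply: sub.
by exists s => // n cn; apply: nc; exists n.
Qed.

End OscillationControl.

Unset Implicit Arguments.

Theorem theorem3p1 (R : realType) (X K : topologicalType) (f : X * K -> R)
  (Gamma : set {ptws X -> R}) (U : nat -> nat -> set K) :
  sep_continuous f ->
  seq_of_countable_covers U ->
  sigma_beta_defavorable Gamma ->
  cpc_covers (phi_of f) Gamma U ->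
  forall eps : R, 0 < eps ->
  exists Reps : set X, residual Reps /\
    forall x y, Reps x ->
      exists (k : nat) (s : nat -> nat),
        (forall i, (i <= k)%N -> U i (s i) y) /\
        exists O : set (X * K), nbhs (x, y) O /\
          forall x' y', O (x', y') -> (forall i, (i <= k)%N -> U i (s i) y') ->
            `|f (x, y) - f (x', y')| < eps.
Proof.
move=> f_sep cover defav cpc eps eps_gt0.
exists (well_controlled f U eps); split.
  exact: residual_well_controlled.
move=> x y wc.
have /choice[s celly] i : exists k, U i k y.
  have [k _ Uk] : (\bigcup_k U i k) y by rewrite cover.
  by exists k.
have [n cn] := wc s.
have [W nW close] :=
  controlled_continuity eps_gt0 f_sep cn (fun i _ => celly i).
by exists n, s; split=> [i _|]; [exact: celly|exists W].
Qed.
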